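(* The full subcategory of $\mathbb{B}\text{-}\mathbf{Top}$ consisting of Hausdorff $\mathbb{B}$-topological spaces is reflective.
   Context: $\mathbb{B}=\{0,1,tt,ff\}$ is the four-element Boolean algebra with bottom $0$, top $1$, and $tt,ff$ incomparable complements; $\neg$ its complement, $a\to b=\neg a\vee b$. A $\mathbb{B}$-topology on $X$ is $\tau\subseteq\mathbb{B}^X$ containing all constant maps and closed under arbitrary pointwise joins and finite pointwise meets; $\mu$ is closed if $\neg\mu\in\tau$. $\mathbb{B}\text{-}\mathbf{Top}$ is the category of $\mathbb{B}$-topological spaces with continuous maps $f\colon(X,\tau_X)\to(Y,\tau_Y)$, i.e. $\lambda\circ f\in\tau_X$ for all $\lambda\in\tau_Y$. Specialization $\mathbb{B}$-order: $\Omega(\tau)(x,y)=\bigwedge_{\lambda\in\tau}(\lambda(x)\to\lambda(y))$. The product $(X,\tau)\times(X,\tau)$ is $X\times X$ with the $\mathbb{B}$-topology generated by the constants and $\{\lambda\circ\pi_1,\lambda\circ\pi_2:\lambda\in\tau\}$. $(X,\tau)$ is $R_1$ if $\Omega(\tau)$ is a closed set of $(X,\tau)\times(X,\tau)$, $T_0$ if $\Omega(\tau)(x,y)=1=\Omega(\tau)(y,x)$ implies $x=y$, and Hausdorff if $T_0$ and $R_1$. *)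

From Stdlib Require Import ClassicalEpsilon.

Inductive B4 : Type := b0 | b1 | btt | bff.

Definition Ble (a b : B4) : Prop :=
  match a, b with
  | b0, _ => True
  | _, b1 => True
  | btt, btt => True
  | bff, bff => True
  | _, _ => False
  end.

Definition Bjoin (a b : B4) : B4 :=
  match a, b with
  | b0, x => x
  | x, b0 => x
  | b1, _ => b1
  | _, b1 => b1
  | btt, btt => btt
  | bff, bff => bff
  | _, _ => b1
  end.

Definition Bmeet (a b : B4) : B4 :=
  match a, b with
  | b1, x => x
  | x, b1 => x
  | b0, _ => b0
  | _, b0 => b0
  | btt, btt => btt
  | bff, bff => bff
  | _, _ => b0
  end.

Definition Bneg (a : B4) : B4 :=
  match a with b0 => b1 | b1 => b0 | btt => bff | bff => btt end.

Definition Bimp (a b : B4) : B4 := Bjoin (Bneg a) b.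

Definition dec (P : Prop) : bool :=
  if excluded_middle_informative P then true else false.

Definition Bsup (P : B4 -> Prop) : B4 :=
  if dec (P b1 \/ (P btt /\ P bff)) then b1
  else if dec (P btt) then btt
  else if dec (P bff) then bff
  else b0.

Definition Binf (P : B4 -> Prop) : B4 :=
  if dec (P b0 \/ (P btt /\ P bff)) then b0
  else if dec (P btt) then btt
  else if dec (P bff) then bff
  else b1.

Definition Btopology {X : Type} (tau : (X -> B4) -> Prop) : Prop :=
  (forall c : B4, tau (fun _ => c)) /\
  (forall S : (X -> B4) -> Prop, (forall l, S l -> tau l) ->
     tau (fun x => Bsup (fun b => exists l, S l /\ l x = b))) /\
  (forall l m, tau l -> tau m -> tau (fun x => Bmeet (l x) (m x))).

Definition Bclosed {X : Type} (tau : (X -> B4) -> Prop) (mu : X -> B4) : Prop :=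
  tau (fun x => Bneg (mu x)).

Definition Bcontinuous {X Y : Type} (tX : (X -> B4) -> Prop)
  (tY : (Y -> B4) -> Prop) (f : X -> Y) : Prop :=
  forall l, tY l -> tX (fun x => l (f x)).

Definition Omega {X : Type} (tau : (X -> B4) -> Prop) (x y : X) : B4 :=
  Binf (fun b => exists l, tau l /\ Bimp (l x) (l y) = b).

Definition generated {X : Type} (S : (X -> B4) -> Prop) : (X -> B4) -> Prop :=
  fun mu => forall T : (X -> B4) -> Prop, Btopology T ->
    (forall l, S l -> T l) -> T mu.

Definition prod_top {X : Type} (tau : (X -> B4) -> Prop) : (X * X -> B4) -> Prop :=
  generated (fun nu => (exists c : B4, nu = fun _ => c) \/
                       exists l, tau l /\ (nu = (fun p => l (fst p)) \/
                                           nu = (fun p => l (snd p)))).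

Definition R1 {X : Type} (tau : (X -> B4) -> Prop) : Prop :=
  Bclosed (prod_top tau) (fun p => Omega tau (fst p) (snd p)).

Definition T0 {X : Type} (tau : (X -> B4) -> Prop) : Prop :=
  forall x y : X, Omega tau x y = b1 -> Omega tau y x = b1 -> x = y.

Definition Hausdorff {X : Type} (tau : (X -> B4) -> Prop) : Prop :=
  T0 tau /\ R1 tau.

(* The reflection of (X, tX) is its quotient by the relation "not separated by any
   continuous map into a Hausdorff space", carrying the initial B-topology of all
   such maps (which factor through the quotient).  T0 holds because the
   specialization order can only grow along continuous maps.  For R1, the complement
   of the specialization order of the quotient turns out to be the join of the
   complements of the specialization orders of the Hausdorff targets pulled back
   along the factored maps; each of these is open in the product by R1 of the
   target, hence so is their join. *)
From Stdlib Require Import ClassicalEpsilon FunctionalExtensionality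
  PropExtensionality ProofIrrelevance.

Lemma Ble_trans a b c : Ble a b -> Ble b c -> Ble a c.
Proof. destruct a, b, c; simpl; tauto. Qed.

Lemma Ble_antisym a b : Ble a b -> Ble b a -> a = b.
Proof. destruct a, b; simpl; tauto. Qed.

Lemma Ble_1 a : Ble a b1.
Proof. destruct a; simpl; auto. Qed.

Lemma Ble_1_eq a : Ble b1 a -> a = b1.
Proof. destruct a; simpl; tauto. Qed.

Lemma Bneg_le_swap a b : Ble (Bneg a) b -> Ble (Bneg b) a.
Proof. destruct a, b; simpl; tauto. Qed.

Lemma Bneg_le_anti a b : Ble a b -> Ble (Bneg b) (Bneg a).
Proof. destruct a, b; simpl; tauto. Qed.

Lemma Bimp_diag a : Bimp a a = b1.
Proof. destruct a; reflexivity. Qed.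

Lemma Bmeet_comm a b : Bmeet a b = Bmeet b a.
Proof. destruct a, b; reflexivity. Qed.

Lemma Bmeet_le_Bimp r a b : Ble (Bmeet r a) b <-> Ble r (Bimp a b).
Proof. destruct r, a, b; simpl; tauto. Qed.

Lemma Ble_Bimp_meet r a b c d : Ble r (Bimp a b) -> Ble r (Bimp c d) ->
  Ble r (Bimp (Bmeet a c) (Bmeet b d)).
Proof. destruct r, a, b, c, d; simpl; tauto. Qed.

Lemma Bsup_ub (P : B4 -> Prop) b : P b -> Ble b (Bsup P).
Proof.
  intro H; unfold Bsup, dec;
  repeat destruct excluded_middle_informative; destruct b; simpl in *; tauto.
Qed.

Lemma Bsup_lub (P : B4 -> Prop) c : (forall a, P a -> Ble a c) -> Ble (Bsup P) c.
Proof.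
  intro H; pose proof (H b1); pose proof (H btt); pose proof (H bff);
  unfold Bsup, dec;
  repeat destruct excluded_middle_informative; destruct c; simpl in *; tauto.
Qed.

Lemma Binf_lb (P : B4 -> Prop) b : P b -> Ble (Binf P) b.
Proof.
  intro H; unfold Binf, dec;
  repeat destruct excluded_middle_informative; destruct b; simpl in *; tauto.
Qed.

Lemma Binf_glb (P : B4 -> Prop) c : (forall a, P a -> Ble c a) -> Ble c (Binf P).
Proof.
  intro H; pose proof (H b0); pose proof (H btt); pose proof (H bff);
  unfold Binf, dec;
  repeat destruct excluded_middle_informative; destruct c; simpl in *; tauto.
Qed.

Lemma Bsup_ext (P Q : B4 -> Prop) : (forall b, P b <-> Q b) -> Bsup P = Bsup Q.
Proof.
  intro H; apply Ble_antisym; apply Bsup_lub; intros a Ha; apply Bsup_ub, H; exact Ha.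
Qed.

Lemma Omega_le_Bimp {X} (tau : (X -> B4) -> Prop) l x y :
  tau l -> Ble (Omega tau x y) (Bimp (l x) (l y)).
Proof. intro H; apply Binf_lb; eauto. Qed.

Lemma Omega_glb {X} (tau : (X -> B4) -> Prop) x y c :
  (forall l, tau l -> Ble c (Bimp (l x) (l y))) -> Ble c (Omega tau x y).
Proof. intro H; apply Binf_glb; intros a [l [Hl <-]]; auto. Qed.

Lemma Omega_continuous {X Y} (tX : (X -> B4) -> Prop) (tY : (Y -> B4) -> Prop) f x x' :
  Bcontinuous tX tY f -> Ble (Omega tX x x') (Omega tY (f x) (f x')).
Proof.
  intro Hf; apply Omega_glb; intros l Hl.
  exact (Omega_le_Bimp tX (fun x => l (f x)) x x' (Hf l Hl)).
Qed.

Lemma Btopology_generated {X} (S : (X -> B4) -> Prop) : Btopology (generated S).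
Proof.
  split; [|split].
  - intros c T [Hc _] _; apply Hc.
  - intros Sf HS T HT HST; apply (proj1 (proj2 HT)); intros l Hl; apply HS; auto.
  - intros l m Hl Hm T HT HST; apply (proj2 (proj2 HT)); [apply Hl | apply Hm]; auto.
Qed.

Lemma generated_incl {X} (S : (X -> B4) -> Prop) l : S l -> generated S l.
Proof. intros H T _ HT; auto. Qed.

Lemma Btopology_preimage {X Y} (T : (X -> B4) -> Prop) (h : X -> Y) :
  Btopology T -> Btopology (fun mu : Y -> B4 => T (fun x => mu (h x))).
Proof.
  intros [Hc [Hj Hm]]; split; [|split].
  - intro c; apply Hc.
  - intros Sf HS.
    pose (S' := fun l' => exists l, Sf l /\ l' = (fun x => l (h x))).
    assert (HS' : forall l', S' l' -> T l') by (intros l' [l [Hl ->]]; apply HS, Hl).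
    replace (fun x => Bsup (fun b => exists l, Sf l /\ l (h x) = b))
      with (fun x => Bsup (fun b => exists l, S' l /\ l x = b)); [exact (Hj S' HS')|].
    apply functional_extensionality; intro x; apply Bsup_ext; intro b; split.
    + intros [l' [[l [Hl ->]] E]]; eauto.
    + intros [l [Hl E]]; exists (fun x => l (h x)); split; [exists l|]; auto.
  - intros l m; apply Hm.
Qed.

Lemma Bcontinuous_generated {X Y} (tX : (X -> B4) -> Prop) (S : (Y -> B4) -> Prop)
  (h : X -> Y) :
  Btopology tX -> (forall s, S s -> tX (fun x => s (h x))) ->
  Bcontinuous tX (generated S) h.
Proof.
  intros HX HS mu Hmu; apply (Hmu (fun mu => tX (fun x => mu (h x)))); auto.
  apply Btopology_preimage, HX.
Qed.

Lemma Bcontinuous_prod_map {X Y} (tX : (X -> B4) -> Prop) (tY : (Y -> B4) -> Prop)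
  (h : X -> Y) :
  Bcontinuous tX tY h ->
  Bcontinuous (prod_top tX) (prod_top tY) (fun p => (h (fst p), h (snd p))).
Proof.
  intro Hh; apply Bcontinuous_generated; [apply Btopology_generated|].
  intros s [[c ->] | [l [Hl [-> | ->]]]]; apply generated_incl.
  - left; exists c; reflexivity.
  - right; exists (fun x => l (h x)); split; [apply Hh, Hl | left; reflexivity].
  - right; exists (fun x => l (h x)); split; [apply Hh, Hl | right; reflexivity].
Qed.

Lemma Btopology_Bimp_bounded {X} (r : X -> X -> B4) :
  Btopology (fun l => forall x y, Ble (r x y) (Bimp (l x) (l y))).
Proof.
  split; [|split].
  - intros c x y; rewrite Bimp_diag; apply Ble_1.
  - intros S HS x y.
    apply Bmeet_le_Bimp; rewrite Bmeet_comm; apply Bmeet_le_Bimp.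
    apply Bsup_lub; intros a [l [Hl <-]].
    apply Bmeet_le_Bimp; rewrite Bmeet_comm.
    apply Ble_trans with (l y); [apply Bmeet_le_Bimp, HS, Hl|].
    apply Bsup_ub; eauto.
  - intros l m Hl Hm x y; apply Ble_Bimp_meet; auto.
Qed.

Section HausdorffReflection.

Variable X : Type.
Variable tX : (X -> B4) -> Prop.
Hypothesis HX : Btopology tX.

Definition Hausdorff_map {Z : Type} (tZ : (Z -> B4) -> Prop) (f : X -> Z) : Prop :=
  Btopology tZ /\ Hausdorff tZ /\ Bcontinuous tX tZ f.

Definition unseparated (x x' : X) : Prop :=
  forall (Z : Type) (tZ : (Z -> B4) -> Prop) (f : X -> Z),
    Hausdorff_map tZ f -> f x = f x'.

Definition reflection : Type :=
  {P : X -> Prop | exists x, P = unseparated x}.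

Definition eta (x : X) : reflection := exist _ (unseparated x) (ex_intro _ x eq_refl).

Definition rep (y : reflection) : X :=
  proj1_sig (constructive_indefinite_description _ (proj2_sig y)).

Definition lift {Z : Type} (f : X -> Z) (y : reflection) : Z := f (rep y).

Lemma rep_spec y : proj1_sig y = unseparated (rep y).
Proof. unfold rep; destruct constructive_indefinite_description; auto. Qed.

Lemma eta_eq x x' : unseparated x x' -> eta x = eta x'.
Proof.
  intro H; apply eq_sig_hprop; [intros; apply proof_irrelevance|]; simpl.
  apply functional_extensionality; intro z; apply propositional_extensionality.
  split; intros H' Z tZ f Hf; specialize (H Z tZ f Hf); specialize (H' Z tZ f Hf);
    congruence.
Qed.

Lemma eta_rep y : eta (rep y) = y.
Proof.
  apply eq_sig_hprop; [intros; apply proof_irrelevance|]; simpl.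
  symmetry; apply rep_spec.
Qed.

Lemma lift_eta {Z} (tZ : (Z -> B4) -> Prop) f x :
  Hausdorff_map tZ f -> lift f (eta x) = f x.
Proof.
  intro Hf; assert (E := rep_spec (eta x)); simpl in E.
  assert (R : unseparated (rep (eta x)) x) by (rewrite <- E; intros ? ? ? _; reflexivity).
  exact (R Z tZ f Hf).
Qed.

Definition lifted_open (mu : reflection -> B4) : Prop :=
  exists (Z : Type) (tZ : (Z -> B4) -> Prop) (f : X -> Z) (l : Z -> B4),
    Hausdorff_map tZ f /\ tZ l /\ mu = fun y => l (lift f y).

Definition reflection_top : (reflection -> B4) -> Prop := generated lifted_open.

Lemma lift_continuous {Z} (tZ : (Z -> B4) -> Prop) f :
  Hausdorff_map tZ f -> Bcontinuous reflection_top tZ (lift f).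
Proof. intros Hf l Hl; apply generated_incl; exists Z, tZ, f, l; auto. Qed.

Lemma eta_continuous : Bcontinuous tX reflection_top eta.
Proof.
  apply Bcontinuous_generated; [exact HX|].
  intros s [Z [tZ [f [l [Hf [Hl ->]]]]]].
  replace (fun x => l (lift f (eta x))) with (fun x => l (f x))
    by (apply functional_extensionality; intro x; rewrite (lift_eta tZ); auto).
  apply (proj2 (proj2 Hf)), Hl.
Qed.

Lemma reflection_T0 : T0 reflection_top.
Proof.
  intros y y' E E'.
  rewrite <- (eta_rep y), <- (eta_rep y'); apply eta_eq.
  intros Z tZ f Hf; change (lift f y = lift f y'); apply (proj1 (proj1 (proj2 Hf))).
  - apply Ble_1_eq; rewrite <- E; apply Omega_continuous, (lift_continuous tZ), Hf.
  - apply Ble_1_eq; rewrite <- E'; apply Omega_continuous, (lift_continuous tZ), Hf.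
Qed.

Definition lifted_Omega_compl (nu : reflection * reflection -> B4) : Prop :=
  exists (Z : Type) (tZ : (Z -> B4) -> Prop) (f : X -> Z),
    Hausdorff_map tZ f /\
    nu = fun p => Bneg (Omega tZ (lift f (fst p)) (lift f (snd p))).

Definition Omega_compl_sup (p : reflection * reflection) : B4 :=
  Bsup (fun b => exists nu, lifted_Omega_compl nu /\ nu p = b).

Lemma Omega_reflection_compl p :
  Bneg (Omega reflection_top (fst p) (snd p)) = Omega_compl_sup p.
Proof.
  destruct p as [y y']; simpl; apply Ble_antisym.
  - apply Bneg_le_swap; apply Omega_glb; intros l Hl.
    revert y y'; apply (Hl _ (Btopology_Bimp_bounded
      (fun y y' => Bneg (Omega_compl_sup (y, y'))))).
    intros mu [Z [tZ [f [l' [Hf [Hl' ->]]]]]] y y'.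
    apply Ble_trans with (Omega tZ (lift f y) (lift f y')); [|apply Omega_le_Bimp, Hl'].
    apply Bneg_le_swap, Bsup_ub.
    eexists; split; [exists Z, tZ, f; split; [exact Hf | reflexivity] | reflexivity].
  - apply Bsup_lub; intros a [nu [[Z [tZ [f [Hf ->]]]] <-]]; simpl.
    apply Bneg_le_anti, Omega_continuous, (lift_continuous tZ), Hf.
Qed.

Lemma reflection_R1 : R1 reflection_top.
Proof.
  unfold R1, Bclosed.
  replace (fun p : reflection * reflection => Bneg (Omega reflection_top (fst p) (snd p)))
    with Omega_compl_sup
    by (apply functional_extensionality; intro p; symmetry; apply Omega_reflection_compl).
  apply (proj1 (proj2 (Btopology_generated _))).
  intros nu [Z [tZ [f [Hf ->]]]].
  apply (Bcontinuous_prod_map _ _ _ (lift_continuous tZ f Hf)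
           (fun q => Bneg (Omega tZ (fst q) (snd q)))).
  apply (proj2 (proj1 (proj2 Hf))).
Qed.

End HausdorffReflection.

Theorem mainTheorem16 :
  forall (X : Type) (tX : (X -> B4) -> Prop), Btopology tX ->
  exists (Y : Type) (tY : (Y -> B4) -> Prop) (eta : X -> Y),
    Btopology tY /\ Hausdorff tY /\ Bcontinuous tX tY eta /\
    forall (Z : Type) (tZ : (Z -> B4) -> Prop), Btopology tZ -> Hausdorff tZ ->
    forall f : X -> Z, Bcontinuous tX tZ f ->
    exists! g : Y -> Z, Bcontinuous tY tZ g /\ (forall x, g (eta x) = f x).
Proof.
  intros X tX HX.
  exists (reflection X tX), (reflection_top X tX), (eta X tX).
  split; [apply Btopology_generated|].
  split; [split; [apply reflection_T0 | apply reflection_R1]|].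
  split; [apply eta_continuous, HX|].
  intros Z tZ HZ HZH f Hf.
  assert (Hmap : Hausdorff_map X tX tZ f) by (split; [|split]; assumption).
  exists (lift X tX f); split; [split|].
  - apply (lift_continuous X tX tZ f Hmap).
  - intro x; apply (lift_eta X tX tZ f x Hmap).
  - intros g [_ Hg]; apply functional_extensionality; intro y.
    rewrite <- (eta_rep X tX y) at 2; rewrite Hg; reflexivity.
Qed.
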